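(* For every base $\mathcal{B}$, atomic multiset $L$ and ILL formula $\varphi$: if $\Vdash^L_{\mathcal{B}}!\varphi$, then $\Vdash^L_{\mathcal{B}}1$.
   Context: Fix a set $\mathbb{A}$ of propositional atoms. ILL formulae: $\phi ::= p\in\mathbb{A} \mid \top \mid 0 \mid 1 \mid \phi\multimap\phi \mid \phi\otimes\phi \mid \phi\,\&\,\phi \mid \phi\oplus\phi \mid\ !\phi$. All multisets are finite; ''$\Gamma,\Delta$'' denotes multiset union. Atomic rules and bases: an atomic sequent is $P\Rightarrow p$ with $P$ a multiset of atoms, $p$ an atom. An atomic box is a multiset of atomic sequents. An atomic rule is a triple $\langle\mathbf{A},\mathbf{S},p\rangle$ with $\mathbf{A}$ a multiset of atomic boxes, $\mathbf{S}$ an atomic box, $p$ an atom. A base is a set of atomic rules. An atom $p$ is persistent in $\mathcal{B}$ if some $\langle\varnothing,\mathbf{S},p\rangle\in\mathcal{B}$ has $\mathbf{S}\neq\varnothing$. Derivability $\vdash_{\mathcal{B}}$: (Ref) $p\vdash_{\mathcal{B}}p$; (App) if $\langle\mathbf{A},\mathbf{S},p\rangle\in\mathcal{B}$ with $\mathbf{A}=\{\mathbf{T}_1,\dots,\mathbf{T}_m\}$, and there are atomic multisets $C_1,\dots,C_n$ ($n\ge m$) and a multiset $D=\{d_{m+1},\dots,d_n\}$ of atoms persistent in $\mathcal{B}$ such that $C_i,Q\vdash_{\mathcal{B}}q$ for every $i\le m$ and every $Q\Rightarrow q\in\mathbf{T}_i$, $C_j\vdash_{\mathcal{B}}d_j$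 for every $m<j\le n$, and $D,U\vdash_{\mathcal{B}}v$ for every $U\Rightarrow v\in\mathbf{S}$, then $C_1,\dots,C_n\vdash_{\mathcal{B}}p$. Support $\Vdash^L_{\mathcal{B}}$ (base $\mathcal{B}$, atomic multiset $L$), by induction on formulae: $\Vdash^L_{\mathcal{B}}p$ iff $L\vdash_{\mathcal{B}}p$; $\Vdash^L_{\mathcal{B}}\varphi\multimap\psi$ iff $\varphi\Vdash^L_{\mathcal{B}}\psi$; $\Vdash^L_{\mathcal{B}}\varphi\otimes\psi$ iff for all $\mathcal{C}\supseteq\mathcal{B}$, atomic $K$, atoms $p$: if $\varphi,\psi\Vdash^K_{\mathcal{C}}p$ then $\Vdash^{L,K}_{\mathcal{C}}p$; $\Vdash^L_{\mathcal{B}}1$ iff for all $\mathcal{C}\supseteq\mathcal{B}$, $K$, $p$: if $\Vdash^K_{\mathcal{C}}p$ then $\Vdash^{L,K}_{\mathcal{C}}p$; $\Vdash^L_{\mathcal{B}}\varphi\&\psi$ iff $\Vdash^L_{\mathcal{B}}\varphi$ and $\Vdash^L_{\mathcal{B}}\psi$; $\Vdash^L_{\mathcal{B}}\varphi\oplus\psi$ iff for all $\mathcal{C}\supseteq\mathcal{B}$, $K$, $p$: if $\varphi\Vdash^K_{\mathcal{C}}p$ and $\psi\Vdash^K_{\mathcal{C}}p$ then $\Vdash^{L,K}_{\mathcal{C}}p$; $\Vdash^L_{\mathcal{B}}0$ iff $\Vdash^{L,K}_{\mathcal{B}}p$ for all atoms $p$ and atomic $K$; $\Vdash^L_{\mathcal{B}}\top$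 always; $\Vdash^L_{\mathcal{B}}!\varphi$ iff for all $\mathcal{C}\supseteq\mathcal{B}$, $K$, $p$: if (for all $\mathcal{D}\supseteq\mathcal{C}$, $\Vdash^{\varnothing}_{\mathcal{D}}\varphi$ implies $\Vdash^K_{\mathcal{D}}p$) then $\Vdash^{L,K}_{\mathcal{C}}p$. For nonempty multisets: $\Vdash^L_{\mathcal{B}}\Gamma,\Delta$ iff $L=K,M$ with $\Vdash^K_{\mathcal{B}}\Gamma$ and $\Vdash^M_{\mathcal{B}}\Delta$. For a nonempty antecedent written $!\Delta,\Theta$, where $!\Delta$ collects the formulae with top-level connective $!$ (with $\Delta$ the formulae under those $!$) and $\Theta$ contains none: $!\Delta,\Theta\Vdash^L_{\mathcal{B}}\varphi$ iff for all $\mathcal{C}\supseteq\mathcal{B}$ and atomic $K$, if $\Vdash^{\varnothing}_{\mathcal{C}}\delta$ for every $\delta\in\Delta$ and $\Vdash^K_{\mathcal{C}}\Theta$ then $\Vdash^{L,K}_{\mathcal{C}}\varphi$ (when $\Theta$ is empty, $K$ is empty). An empty antecedent: $\varnothing\Vdash^L_{\mathcal{B}}\varphi$ means $\Vdash^L_{\mathcal{B}}\varphi$. *)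

From Stdlib Require Import List Permutation.
Import ListNotations.

Set Implicit Arguments.

Section BeS.

Variable atom : Type.

(* Finite multisets are represented by lists; every notion below is
   invariant under permutation of these lists. *)

Definition sequent := (list atom * atom)%type.
Definition box := list sequent.

Record rule := mkRule { r_prem : list box; r_box : box; r_head : atom }.

Definition base := rule -> Prop.

Definition ext (B C : base) : Prop := forall r, B r -> C r.

Definition persistent (B : base) (p : atom) : Prop :=
  exists S : box, B (mkRule [] S p) /\ S <> [].

Inductive derives (B : base) : list atom -> atom -> Prop :=
| d_ref : forall (p : atom) (L : list atom),
    Permutation L [p] -> derives B L p
| d_app : forall (A : list box) (S : box) (p : atom)
                 (Cs1 Cs2 : list (list atom)) (D : list atom) (L : list atom),
    B (mkRule A S p) ->
    length Cs1 = length A ->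
    (forall i, i < length A ->
       forall Q q, In (Q, q) (nth i A []) -> derives B (nth i Cs1 [] ++ Q) q) ->
    (* D = {d_(m+1), ..., d_n}, all persistent, with C_j |- d_j *)
    length Cs2 = length D ->
    (forall d, In d D -> persistent B d) ->
    (forall j, j < length D -> derives B (nth j Cs2 []) (nth j D (r_head (mkRule A S p)))) ->
    (forall U v, In (U, v) S -> derives B (D ++ U) v) ->
    Permutation L (concat (Cs1 ++ Cs2)) ->
    derives B L p.

Inductive form : Type :=
| Atom : atom -> form
| Top : form
| Zero : form
| One : form
| Lolli : form -> form -> form
| Tensor : form -> form -> form
| With : form -> form -> form
| Plus : form -> form -> form
| Bang : form -> form.

(* Antecedent judgements follow the paper: a formula !d in an antecedent
   contributes the condition ||-^{empty}_C d (and no resources); any other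
   formula t contributes a share K_t of the resources K with ||-^{K_t}_C t. *)
Fixpoint sup (f : form) (B : base) (L : list atom) {struct f} : Prop :=
  match f with
  | Atom p => derives B L p
  | Top => True
  | Zero => forall (p : atom) (K : list atom), derives B (L ++ K) p
  | One => forall C, ext B C -> forall (K : list atom) (p : atom),
             derives C K p -> derives C (L ++ K) p
  | Lolli a b =>
      forall C, ext B C -> forall K : list atom,
        (match a with Bang d => sup d C [] | _ => True end) ->
        (match a with Bang _ => K = [] | _ => sup a C K end) ->
        sup b C (L ++ K)
  | Tensor a b =>
      forall C, ext B C -> forall (K : list atom) (p : atom),
        (forall D, ext C D -> forall K' : list atom,
           (match a with Bang d => sup d D [] | _ => True end) ->
           (match b with Bang d => sup d D [] | _ => True end) ->
           (exists K1 K2, Permutation K' (K1 ++ K2) /\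
              (match a with Bang _ => K1 = [] | _ => sup a D K1 end) /\
              (match b with Bang _ => K2 = [] | _ => sup b D K2 end)) ->
           derives D (K ++ K') p) ->
        derives C (L ++ K) p
  | With a b => sup a B L /\ sup b B L
  | Plus a b =>
      forall C, ext B C -> forall (K : list atom) (p : atom),
        (forall D, ext C D -> forall K' : list atom,
           (match a with Bang d => sup d D [] | _ => True end) ->
           (match a with Bang _ => K' = [] | _ => sup a D K' end) ->
           derives D (K ++ K') p) ->
        (forall D, ext C D -> forall K' : list atom,
           (match b with Bang d => sup d D [] | _ => True end) ->
           (match b with Bang _ => K' = [] | _ => sup b D K' end) ->
           derives D (K ++ K') p) ->
        derives C (L ++ K) p
  | Bang a =>
      forall C, ext B C -> forall (K : list atom) (p : atom),
        (forall D, ext C D -> sup a D [] -> derives D K p) ->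
        derives C (L ++ K) p
  end.

End BeS.

From Stdlib Require Import List Permutation.

(* Derivability is monotone under base extension, so an atomic judgement
   [K |-_C p] already holds in every extension of [C]; this discharges the
   premise of the clause for [!phi] without ever using [phi]. *)

Lemma derives_ext (atom : Type) (B C : base atom) (L : list atom) (p : atom) :
  ext B C -> derives B L p -> derives C L p.
Proof.
  intros HBC Hder.
  induction Hder as [p L Hperm
                    | A S p Cs1 Cs2 D L HB Hlen1 _ IHprem Hlen2 Hpers _ IHpers
                      _ IHbox Hperm].
  - now apply d_ref.
  - apply (d_app (B := C) A S p Cs1 Cs2 D); auto.
    intros d Hd; destruct (Hpers d Hd) as [S0 [HS0 HS0nil]].
    now exists S0; split; auto.
Qed.

Theorem lemma11 (atom : Type) (B : base atom) (L : list atom) (phi : form atom) :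
  sup (Bang phi) B L -> sup (One atom) B L.
Proof.
  intros Hbang C HBC K p HK.
  apply Hbang; [exact HBC |].
  intros D HCD _; now apply derives_ext with C.
Qed.
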